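(* Let $\lambda$ be a regular cardinal, $(P,\le)$ a poset, $i\in\{1,2,3\}$, and let $f:\lambda\to P$ be a $\lambda$-sequence that converges to $x\in P$ with respect to the topology $\tau^\lambda_{O_i}(P)$. Then there exists an isotone and cofinal function $\hat h:\lambda\to\lambda$ such that the $\lambda$-sequence $f\circ\hat h$ O$_i$-converges to $x$.
   Context: A $\lambda$-sequence in $P$ is a function $f:\lambda\to P$, regarded as a net indexed by the well-ordered (directed) set $\lambda$. A function $h:\lambda\to\lambda$ is cofinal if its range is cofinal (unbounded) in $\lambda$, and isotone if $\alpha\le\beta$ implies $h(\alpha)\le h(\beta)$. For monotone nets, $y_\gamma\uparrow y$ means increasing with supremum $y$, $z_\gamma\downarrow y$ decreasing with infimum $y$; $[a,b]:=\{t:a\le t\le b\}$; directed/filtered sets are nonempty sets in which finite subsets have upper/lower bounds in the set. A net $(x_\gamma)_{\gamma\in\Gamma}$ O$_1$-converges to $x$ if there are nets $(y_\gamma)_{\gamma\in\Gamma}$, $(z_\gamma)_{\gamma\in\Gamma}$ with eventually $y_\gamma\le x_\gamma\le z_\gamma$, $y_\gamma\uparrow x$, $z_\gamma\downarrow x$; it O$_2$-converges to $x$ if there are directed $M$ and filtered $N$ with $\sup M=\inf N=x$ such that for every $(m,n)\in M\times N$ the net is eventually in $[m,n]$; it O$_3$-converges to $x$ if the same holds with $M,N$ arbitrary subsets with $\sup M=\inf N=x$. A subset $X\subseteq P$ is O$^\lambda_i$-closed if no $\lambda$-sequence in $X$ O$_i$-converges to a point outside $X$; these sets are the closed sets of a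 topology $\tau^\lambda_{O_i}(P)$. *)

From Stdlib Require Import Classical.

Definition is_poset {P : Type} (le : P -> P -> Prop) : Prop :=
  (forall x, le x x) /\
  (forall x y, le x y -> le y x -> x = y) /\
  (forall x y z, le x y -> le y z -> le x z).

Definition upper_bound {P : Type} (le : P -> P -> Prop) (M : P -> Prop) (u : P) :=
  forall m, M m -> le m u.
Definition lower_bound {P : Type} (le : P -> P -> Prop) (N : P -> Prop) (l : P) :=
  forall n, N n -> le l n.
Definition is_sup {P : Type} (le : P -> P -> Prop) (M : P -> Prop) (x : P) :=
  upper_bound le M x /\ (forall u, upper_bound le M u -> le x u).
Definition is_inf {P : Type} (le : P -> P -> Prop) (N : P -> Prop) (x : P) :=
  lower_bound le N x /\ (forall l, lower_bound le N l -> le l x).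

(* directed: nonempty, and every finite subset has an upper bound in the set
   (equivalently: nonempty and every pair has an upper bound in the set) *)
Definition directed {P : Type} (le : P -> P -> Prop) (M : P -> Prop) :=
  (exists m, M m) /\
  (forall a b, M a -> M b -> exists c, M c /\ le a c /\ le b c).
Definition filtered {P : Type} (le : P -> P -> Prop) (N : P -> Prop) :=
  (exists n, N n) /\
  (forall a b, N a -> N b -> exists c, N c /\ le c a /\ le c b).

Definition leq_of {L : Type} (lt : L -> L -> Prop) (a b : L) : Prop := lt a b \/ a = b.

Definition injective {A B : Type} (f : A -> B) := forall x y, f x = f y -> x = y.

(* (L, lt) is (the well-ordered set of ordinals below) an infinite regular
   cardinal lambda:
   - lt is a strict well-order;
   - L is nonempty without a greatest element (lambda is an infinite limit);
   - lambda is an initial ordinal: no proper initial segment is equipotent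
     with L (no injection of L into it);
   - lambda is regular: every cofinal subset of L has cardinality lambda
     (L injects into it), i.e. cf(lambda) = lambda. *)
Definition regular_cardinal (L : Type) (lt : L -> L -> Prop) : Prop :=
  well_founded lt /\
  (forall a, ~ lt a a) /\
  (forall a b c, lt a b -> lt b c -> lt a c) /\
  (forall a b, lt a b \/ a = b \/ lt b a) /\
  (exists a : L, True) /\
  (forall a, exists b, lt a b) /\
  (forall a, ~ exists g : L -> {b : L | lt b a}, injective g) /\
  (forall S : L -> Prop, (forall a, exists b, S b /\ leq_of lt a b) ->
     exists g : L -> {b : L | S b}, injective g).

Section Conv.
Context {L : Type} (lt : L -> L -> Prop) {P : Type} (le : P -> P -> Prop).

Definition eventually (Q : L -> Prop) : Prop :=
  exists a, forall b, leq_of lt a b -> Q b.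

Definition range (f : L -> P) : P -> Prop := fun p => exists a, f a = p.

Definition increasing (y : L -> P) := forall a b, leq_of lt a b -> le (y a) (y b).
Definition decreasing (z : L -> P) := forall a b, leq_of lt a b -> le (z b) (z a).

Definition O1_conv (f : L -> P) (x : P) : Prop :=
  exists y z : L -> P,
    eventually (fun g => le (y g) (f g) /\ le (f g) (z g)) /\
    increasing y /\ is_sup le (range y) x /\
    decreasing z /\ is_inf le (range z) x.

Definition O2_conv (f : L -> P) (x : P) : Prop :=
  exists M N : P -> Prop,
    directed le M /\ filtered le N /\ is_sup le M x /\ is_inf le N x /\
    forall m n, M m -> N n -> eventually (fun g => le m (f g) /\ le (f g) n).

Definition O3_conv (f : L -> P) (x : P) : Prop :=
  exists M N : P -> Prop,
    is_sup le M x /\ is_inf le N x /\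
    forall m n, M m -> N n -> eventually (fun g => le m (f g) /\ le (f g) n).
End Conv.

Inductive Oidx := O1 | O2 | O3.

Definition O_conv {L : Type} (lt : L -> L -> Prop) {P : Type} (le : P -> P -> Prop)
  (i : Oidx) (f : L -> P) (x : P) : Prop :=
  match i with
  | O1 => O1_conv lt le f x
  | O2 => O2_conv lt le f x
  | O3 => O3_conv lt le f x
  end.

Definition O_closed {L : Type} (lt : L -> L -> Prop) {P : Type} (le : P -> P -> Prop)
  (i : Oidx) (X : P -> Prop) : Prop :=
  forall (g : L -> P) (x : P), (forall a, X (g a)) -> O_conv lt le i g x -> X x.

Definition O_open {L : Type} (lt : L -> L -> Prop) {P : Type} (le : P -> P -> Prop)
  (i : Oidx) (U : P -> Prop) : Prop :=
  O_closed lt le i (fun p => ~ U p).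

Definition tau_conv {L : Type} (lt : L -> L -> Prop) {P : Type} (le : P -> P -> Prop)
  (i : Oidx) (f : L -> P) (x : P) : Prop :=
  forall U : P -> Prop, O_open lt le i U -> U x -> eventually lt (fun a => U (f a)).

Definition isotone {L : Type} (lt : L -> L -> Prop) (h : L -> L) :=
  forall a b, leq_of lt a b -> leq_of lt (h a) (h b).
Definition cofinal {L : Type} (lt : L -> L -> Prop) (h : L -> L) :=
  forall a, exists b, leq_of lt a (h b).

(* Split off the trivial O3-limits top and bottom, to which every λ-sequence
   converges; the remaining "proper" O_i-convergence is stable under
   subsequences, unique, and sends a sequence taking the value c cofinally often
   to c.  If F is eventually different from x and all limits of convergent
   subsequences of F lie in a set Z not containing x, then Z together with a
   tail of F is closed and avoids x: a λ-sequence g in such a tail either takes,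
   by regularity of λ, one value F c cofinally often, and then converges to F c,
   or runs through F along indices tending to λ, so that a subsequence of g is a
   subsequence of F.  So τ-convergence forces f, or a subsequence f∘h converging
   to some y ≠ x, to take the value x cofinally often; in the first case a
   constant subsequence converges to x, in the second y = x after all. *)

From Stdlib Require Import Classical ClassicalEpsilon FunctionalExtensionality ProofIrrelevance.

Lemma wf_recursive_choice {A B : Type} (R : A -> A -> Prop) (R_wf : well_founded R)
    (Q : forall a, (forall b, R b a -> B) -> B -> Prop) :
  (forall a rec, exists v, Q a rec v) ->
  exists k : A -> B, forall a, Q a (fun b _ => k b) (k a).
Proof.
  intros Hstep.
  pose (body a rec := proj1_sig (constructive_indefinite_description _ (Hstep a rec))).
  exists (Fix R_wf (fun _ => B) body); intros a.
  rewrite Fix_eq.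
  - exact (proj2_sig (constructive_indefinite_description _ (Hstep a _))).
  - intros a' rec1 rec2 Hrec; unfold body.
    replace rec1 with rec2; [reflexivity|].
    apply functional_extensionality_dep; intros b.
    apply functional_extensionality_dep; intros Hb.
    symmetry; apply Hrec.
Qed.

Definition frequently {L : Type} (lt : L -> L -> Prop) (Q : L -> Prop) : Prop :=
  forall a, exists b, leq_of lt a b /\ Q b.

Definition reindexing {L : Type} (lt : L -> L -> Prop) (h : L -> L) : Prop :=
  isotone lt h /\ cofinal lt h.

Section RegularCardinal.

Context {L : Type} (lt : L -> L -> Prop) (RC : regular_cardinal L lt).

Lemma lt_trans a b c : lt a b -> lt b c -> lt a c.
Proof. destruct RC as (_ & _ & Htrans & _); apply Htrans. Qed.

Lemma lt_trichotomy a b : lt a b \/ a = b \/ lt b a.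
Proof. destruct RC as (_ & _ & _ & Htri & _); apply Htri. Qed.

Lemma L_inhabited : inhabited L.
Proof. destruct RC as (_ & _ & _ & _ & [a _] & _); exact (inhabits a). Qed.

Lemma leq_refl a : leq_of lt a a.
Proof. right; reflexivity. Qed.

Lemma leq_trans a b c : leq_of lt a b -> leq_of lt b c -> leq_of lt a c.
Proof.
  intros [Hab|<-] [Hbc|<-]; [left; exact (lt_trans _ _ _ Hab Hbc)|left|left|right]; auto.
Qed.

Lemma leq_of_not_lt a b : ~ lt a b -> leq_of lt b a.
Proof.
  intros Hab; destruct (lt_trichotomy a b) as [H|[<-|H]]; [contradiction|right|left]; auto.
Qed.

Lemma leq_upper_bound a b : exists c, leq_of lt a c /\ leq_of lt b c.
Proof.
  destruct (lt_trichotomy a b) as [H|[<-|H]].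
  - exists b; split; [left; exact H|apply leq_refl].
  - exists a; split; apply leq_refl.
  - exists a; split; [apply leq_refl|left; exact H].
Qed.

Lemma isotone_of_lt (h : L -> L) :
  (forall a b, lt a b -> leq_of lt (h a) (h b)) -> isotone lt h.
Proof. intros Hh a b [Hab|<-]; [exact (Hh a b Hab)|apply leq_refl]. Qed.

Lemma eventually_and (Q R : L -> Prop) :
  eventually lt Q -> eventually lt R -> eventually lt (fun b => Q b /\ R b).
Proof.
  intros [a Ha] [b Hb]; destruct (leq_upper_bound a b) as [c [Hac Hbc]].
  exists c; intros d Hcd; split; [apply Ha|apply Hb]; eapply leq_trans; eauto.
Qed.

Lemma eventually_frequently (Q R : L -> Prop) :
  eventually lt Q -> frequently lt R -> exists b, Q b /\ R b.
Proof. intros [a Ha] HR; destruct (HR a) as [b [Hab Hb]]; exists b; auto. Qed.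

Lemma eventually_reindex (Q : L -> Prop) (h : L -> L) :
  reindexing lt h -> eventually lt Q -> eventually lt (fun a => Q (h a)).
Proof.
  intros [Hiso Hcof] [a Ha]; destruct (Hcof a) as [b Hb].
  exists b; intros c Hbc; apply Ha; eapply leq_trans; [exact Hb|apply Hiso, Hbc].
Qed.

Lemma eventually_eq_transport {P : Type} (Q : L -> P -> Prop) (g g' : L -> P) :
  eventually lt (fun a => g a = g' a) ->
  eventually lt (fun a => Q a (g a)) -> eventually lt (fun a => Q a (g' a)).
Proof.
  intros Heq HQ; destruct (eventually_and _ _ Heq HQ) as [a Ha].
  exists a; intros b Hab; destruct (Ha b Hab) as [<- H]; exact H.
Qed.

Lemma eventually_not_of_not_frequently (Q : L -> Prop) :
  ~ frequently lt Q -> eventually lt (fun b => ~ Q b).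
Proof.
  intros HQ; apply not_all_ex_not in HQ as [a Ha].
  exists a; intros b Hab Hb; apply Ha; exists b; auto.
Qed.

Lemma frequently_or (Q R : L -> Prop) :
  frequently lt (fun b => Q b \/ R b) -> frequently lt Q \/ frequently lt R.
Proof.
  intros HQR; apply NNPP; intros Hneither; apply not_or_and in Hneither as [HQ HR].
  apply eventually_not_of_not_frequently in HQ, HR.
  destruct (eventually_frequently _ _ (eventually_and _ _ HQ HR) HQR) as [b [[] []]]; auto.
Qed.

Lemma bounded_family (alpha : L) (d : {c | lt c alpha} -> L) :
  exists B, forall c, leq_of lt (d c) B.
Proof.
  destruct RC as (_ & _ & _ & _ & _ & _ & Hinitial & Hregular).
  apply NNPP; intros Hunbounded.
  assert (Hcofinal : forall a, exists b, (exists c, d c = b) /\ leq_of lt a b).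
  { intros a; apply NNPP; intros Hno; apply Hunbounded; exists a; intros c.
    apply leq_of_not_lt; intros Hlt; apply Hno; exists (d c); split; [exists c|left]; auto. }
  destruct (Hregular _ Hcofinal) as [G HG].
  pose (pre b := proj1_sig (constructive_indefinite_description _ (proj2_sig (G b)))).
  assert (Hpre : forall b, d (pre b) = proj1_sig (G b)).
  { intros b; exact (proj2_sig (constructive_indefinite_description _ (proj2_sig (G b)))). }
  apply (Hinitial alpha); exists pre; intros a b Hab; apply HG.
  apply eq_sig_hprop; [intros; apply proof_irrelevance|].
  rewrite <- !Hpre, Hab; reflexivity.
Qed.

Lemma frequently_pigeonhole (alpha : L) (R : L -> L -> Prop) :
  frequently lt (fun b => exists c, lt c alpha /\ R b c) ->
  exists c, lt c alpha /\ frequently lt (fun b => R b c).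
Proof.
  intros HR; apply NNPP; intros Hnone.
  assert (Hev : forall c : {c | lt c alpha}, eventually lt (fun b => ~ R b (proj1_sig c))).
  { intros [c Hc]; apply eventually_not_of_not_frequently; intros Hfreq.
    apply Hnone; exists c; auto. }
  pose (d c := proj1_sig (constructive_indefinite_description _ (Hev c))).
  destruct (bounded_family alpha d) as [B HB].
  destruct (HR B) as [b [HBb [c [Hc Hbc]]]].
  apply (proj2_sig (constructive_indefinite_description _ (Hev (exist _ c Hc))) b); [|exact Hbc].
  exact (leq_trans _ _ _ (HB (exist _ c Hc)) HBb).
Qed.

(* k γ is chosen by transfinite recursion above γ and all k δ, with A (k γ)
   above all A (k δ), for δ < γ; regularity bounds these fewer than λ values. *)
Lemma unbounded_extraction (A : L -> L) :
  (forall alpha, eventually lt (fun b => leq_of lt alpha (A b))) ->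
  exists k, reindexing lt k /\ reindexing lt (fun a => A (k a)).
Proof.
  intros HA.
  destruct (wf_recursive_choice lt (proj1 RC) (fun g rec b => leq_of lt g b /\
      forall d (Hd : lt d g), leq_of lt (rec d Hd) b /\ leq_of lt (A (rec d Hd)) (A b)))
    as [k Hk].
  - intros g rec.
    destruct (bounded_family g (fun d => rec _ (proj2_sig d))) as [B1 HB1].
    destruct (bounded_family g (fun d => A (rec _ (proj2_sig d)))) as [B2 HB2].
    destruct (HA B2) as [b0 Hb0].
    destruct (leq_upper_bound g B1) as [c1 [Hgc1 HB1c1]].
    destruct (leq_upper_bound c1 b0) as [c [Hc1c Hb0c]].
    exists c; split; [eapply leq_trans; eauto|intros d Hd; split].
    + eapply leq_trans; [exact (HB1 (exist _ d Hd))|eapply leq_trans; eauto].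
    + eapply leq_trans; [exact (HB2 (exist _ d Hd))|apply Hb0; exact Hb0c].
  - exists k; repeat split.
    + apply isotone_of_lt; intros a b Hab; apply (Hk b), Hab.
    + intros a; exists a; apply (Hk a).
    + apply isotone_of_lt; intros a b Hab; apply (Hk b), Hab.
    + intros alpha; destruct (HA alpha) as [b Hb]; exists b; apply Hb, (Hk b).
Qed.

Lemma frequently_subsequence (Q : L -> Prop) :
  frequently lt Q -> exists h, reindexing lt h /\ forall a, Q (h a).
Proof.
  intros HQ.
  pose (A b := proj1_sig (constructive_indefinite_description _ (HQ b))).
  assert (HA : forall b, leq_of lt b (A b) /\ Q (A b)).
  { intros b; exact (proj2_sig (constructive_indefinite_description _ (HQ b))). }
  destruct (unbounded_extraction A) as [k [_ Hk]].
  - intros alpha; exists alpha; intros b Hb; eapply leq_trans; [exact Hb|apply HA].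
  - exists (fun a => A (k a)); split; [exact Hk|intros a; apply HA].
Qed.

Section SequentialConvergence.

Context {P : Type} (conv : (L -> P) -> P -> Prop).
Hypothesis conv_reindex :
  forall g z h, reindexing lt h -> conv g z -> conv (fun a => g (h a)) z.
Hypothesis conv_eventually_eq :
  forall g g' z, eventually lt (fun a => g a = g' a) -> conv g z -> conv g' z.
Hypothesis conv_const : forall c, conv (fun _ => c) c.
Hypothesis conv_frequent_value :
  forall g z c, frequently lt (fun a => g a = c) -> conv g z -> z = c.
Hypothesis conv_unique : forall g z z', conv g z -> conv g z' -> z = z'.

Definition conv_closed (X : P -> Prop) : Prop :=
  forall g z, (forall a, X (g a)) -> conv g z -> X z.

Definition frequently_closed (Z : P -> Prop) : Prop :=
  forall g z, frequently lt (fun a => Z (g a)) -> conv g z -> Z z.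

Definition subsequential_limits_in (Z : P -> Prop) (F : L -> P) : Prop :=
  forall h y, reindexing lt h -> conv (fun a => F (h a)) y -> Z y.

Lemma frequently_closed_subsingleton (Z : P -> Prop) :
  (forall p q, Z p -> Z q -> p = q) -> frequently_closed Z.
Proof.
  intros HZ g z Hfreq Hconv; destruct L_inhabited as [a0].
  destruct (Hfreq a0) as [b [_ Hb]].
  rewrite (conv_frequent_value g z (g b)); [exact Hb| |exact Hconv].
  intros a; destruct (Hfreq a) as [c [Hac Hc]]; exists c; split; [exact Hac|apply HZ; auto].
Qed.

Lemma frequently_closed_union (Z1 Z2 : P -> Prop) :
  frequently_closed Z1 -> frequently_closed Z2 ->
  frequently_closed (fun p => Z1 p \/ Z2 p).
Proof.
  intros H1 H2 g z Hfreq Hconv.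
  destruct (frequently_or _ _ Hfreq) as [Hf|Hf];
    [left; exact (H1 g z Hf Hconv)|right; exact (H2 g z Hf Hconv)].
Qed.

Lemma limit_of_unbounded_preimage (Z : P -> Prop) (F g : L -> P) (A : L -> L) z :
  subsequential_limits_in Z F -> conv g z ->
  eventually lt (fun b => F (A b) = g b) ->
  (forall alpha, eventually lt (fun b => leq_of lt alpha (A b))) -> Z z.
Proof.
  intros HF Hconv HAg HA.
  destruct (unbounded_extraction A HA) as [k [Hk HAk]].
  apply (HF _ z HAk), (conv_eventually_eq (fun a => g (k a)));
    [|exact (conv_reindex _ _ _ Hk Hconv)].
  apply (eventually_reindex _ k Hk) in HAg.
  destruct HAg as [a Ha]; exists a; intros b Hb; symmetry; apply Ha, Hb.
Qed.

Lemma tail_closed (Z : P -> Prop) (F : L -> P) (a0 : L) :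
  frequently_closed Z -> subsequential_limits_in Z F ->
  conv_closed (fun p => Z p \/ exists a, leq_of lt a0 a /\ F a = p).
Proof.
  intros HZ HF g z Hg Hconv.
  destruct (classic (frequently lt (fun b => Z (g b)))) as [Hfreq|Hnfreq];
    [left; exact (HZ g z Hfreq Hconv)|].
  pose (tail_index b c := leq_of lt a0 c /\ F c = g b).
  destruct (classic (exists alpha, frequently lt (fun b => exists c, lt c alpha /\ tail_index b c)))
    as [[alpha Hbounded]|Hunbounded].
  - destruct (frequently_pigeonhole alpha _ Hbounded) as [c [_ Hc]].
    destruct L_inhabited as [a]; destruct (Hc a) as [b [_ [Ha0c _]]].
    right; exists c; split; [exact Ha0c|symmetry].
    apply (conv_frequent_value g); [|exact Hconv].
    intros a'; destruct (Hc a') as [b' [Hb' [_ HFc]]]; exists b'; auto.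
  - pose (A b := epsilon (inhabits a0) (tail_index b)).
    assert (HA : eventually lt (fun b => tail_index b (A b))).
    { destruct (eventually_not_of_not_frequently _ Hnfreq) as [a Ha].
      exists a; intros b Hab; apply (epsilon_spec (inhabits a0) (tail_index b)).
      destruct (Hg b) as [HZb|Htail]; [contradiction (Ha b Hab)|exact Htail]. }
    left; apply (limit_of_unbounded_preimage Z F g A z HF Hconv).
    + destruct HA as [a Ha]; exists a; intros b Hab; apply Ha, Hab.
    + intros alpha.
      assert (Hn := not_ex_all_not _ _ Hunbounded alpha).
      destruct (eventually_and _ _ HA (eventually_not_of_not_frequently _ Hn)) as [a Ha].
      exists a; intros b Hab; destruct (Ha b Hab) as [Htail Hnot].
      apply leq_of_not_lt; intros Hlt; apply Hnot; exists (A b); auto.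
Qed.

Context (D : P -> Prop).

Definition topological_limit (f : L -> P) (x : P) : Prop :=
  forall X, conv_closed X -> (forall p, D p -> X p) -> ~ X x ->
    eventually lt (fun a => ~ X (f a)).

Lemma topological_limit_reindex f x h :
  reindexing lt h -> topological_limit f x -> topological_limit (fun a => f (h a)) x.
Proof. intros Hh Hf X HX HD Hx; exact (eventually_reindex _ h Hh (Hf X HX HD Hx)). Qed.

Lemma frequently_eq_topological_limit (Z : P -> Prop) (F : L -> P) x :
  frequently_closed Z -> (forall p, D p -> Z p) -> subsequential_limits_in Z F ->
  ~ Z x -> topological_limit F x -> frequently lt (fun a => F a = x).
Proof.
  intros HZ HDZ HF Hx Hlim; apply NNPP; intros Hnfreq.
  destruct (eventually_not_of_not_frequently _ Hnfreq) as [a0 Ha0].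
  destruct (Hlim _ (tail_closed Z F a0 HZ HF)) as [c Hc].
  - intros p Hp; left; exact (HDZ p Hp).
  - intros [HZx|[a [Ha0a HFa]]]; [exact (Hx HZx)|exact (Ha0 a Ha0a HFa)].
  - destruct (leq_upper_bound c a0) as [b [Hcb Ha0b]].
    apply (Hc b Hcb); right; exists b; auto.
Qed.

Theorem subsequence_conv_of_topological_limit f x :
  frequently_closed D -> ~ D x -> topological_limit f x ->
  exists h, reindexing lt h /\ conv (fun a => f (h a)) x.
Proof.
  intros HD Hx Hlim.
  destruct (classic (exists h y, reindexing lt h /\ conv (fun a => f (h a)) y))
    as [[h [y [Hh Hy]]]|Hnone].
  - exists h; split; [exact Hh|].
    destruct (classic (y = x)) as [<-|Hyx]; [exact Hy|exfalso; apply Hyx].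
    apply (conv_frequent_value (fun a => f (h a))); [|exact Hy].
    apply (frequently_eq_topological_limit (fun p => D p \/ p = y)).
    + apply frequently_closed_union; [exact HD|].
      apply frequently_closed_subsingleton; intros p q -> ->; reflexivity.
    + intros p Hp; left; exact Hp.
    + intros h' p Hh' Hp; right; exact (conv_unique _ _ _ Hp (conv_reindex _ _ _ Hh' Hy)).
    + intros [HDx|Hxy]; [exact (Hx HDx)|exact (Hyx (eq_sym Hxy))].
    + exact (topological_limit_reindex f x h Hh Hlim).
  - assert (Hfreq : frequently lt (fun a => f a = x)).
    { apply (frequently_eq_topological_limit D f x HD);
        [intros p Hp; exact Hp| |exact Hx|exact Hlim].
      intros h y Hh Hy; exfalso; apply Hnone; exists h, y; auto. }
    destruct (frequently_subsequence _ Hfreq) as [h [Hh Hfh]].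
    exists h; split; [exact Hh|].
    apply (conv_eventually_eq (fun _ => x)); [|apply conv_const].
    destruct L_inhabited as [a]; exists a; intros b _; symmetry; apply Hfh.
Qed.

End SequentialConvergence.

End RegularCardinal.

Section OrderBounds.

Context {P : Type} (le : P -> P -> Prop).

Lemma sup_le_inf (M N : P -> Prop) z w :
  is_sup le M z -> is_inf le N w -> (forall m n, M m -> N n -> le m n) -> le z w.
Proof.
  intros [_ Hz] [_ Hw] HMN; apply Hz; intros m Hm; apply Hw; intros n Hn; exact (HMN m n Hm Hn).
Qed.

Lemma is_sup_singleton c : (forall p, le p p) -> is_sup le (fun p => p = c) c.
Proof. intros Hrefl; split; [intros m ->; apply Hrefl|intros u Hu; apply Hu; reflexivity]. Qed.

Lemma is_inf_singleton c : (forall p, le p p) -> is_inf le (fun p => p = c) c.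
Proof. intros Hrefl; split; [intros n ->; apply Hrefl|intros l Hl; apply Hl; reflexivity]. Qed.

Lemma directed_singleton c : (forall p, le p p) -> directed le (fun p => p = c).
Proof.
  intros Hrefl; split; [exists c; reflexivity|intros p q -> ->; exists c; auto].
Qed.

Lemma filtered_singleton c : (forall p, le p p) -> filtered le (fun p => p = c).
Proof.
  intros Hrefl; split; [exists c; reflexivity|intros p q -> ->; exists c; auto].
Qed.

Lemma is_sup_range_const {L : Type} (c : P) :
  inhabited L -> (forall p, le p p) -> is_sup le (range (fun _ : L => c)) c.
Proof.
  intros [a] Hrefl; split;
    [intros m [_ <-]; apply Hrefl|intros u Hu; apply Hu; exists a; reflexivity].
Qed.

Lemma is_sup_range_reindex {L : Type} (lt : L -> L -> Prop) (y : L -> P) (k : L -> L) x :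
  (forall p q r, le p q -> le q r -> le p r) ->
  increasing lt le y -> cofinal lt k -> is_sup le (range y) x ->
  is_sup le (range (fun a => y (k a))) x.
Proof.
  intros Htrans Hy Hk [Hub Hleast]; split.
  - intros m [a <-]; apply Hub; exists (k a); reflexivity.
  - intros u Hu; apply Hleast; intros m [a <-]; destruct (Hk a) as [b Hb].
    apply (Htrans _ (y (k b))); [apply Hy, Hb|apply Hu; exists b; reflexivity].
Qed.

End OrderBounds.

Definition O3_conv_nonempty {L : Type} (lt : L -> L -> Prop) {P : Type} (le : P -> P -> Prop)
    (f : L -> P) (x : P) : Prop :=
  exists M N : P -> Prop, (exists m, M m) /\ (exists n, N n) /\
    is_sup le M x /\ is_inf le N x /\
    forall m n, M m -> N n -> eventually lt (fun g => le m (f g) /\ le (f g) n).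

Definition proper_conv {L : Type} (lt : L -> L -> Prop) {P : Type} (le : P -> P -> Prop)
    (i : Oidx) : (L -> P) -> P -> Prop :=
  match i with O3 => O3_conv_nonempty lt le | _ => O_conv lt le i end.

(* Every λ-sequence O3-converges to a top element (take M = {top}, N = ∅) and to
   a bottom element. *)
Definition trivial_limit {P : Type} (le : P -> P -> Prop) (i : Oidx) (p : P) : Prop :=
  match i with O3 => (forall q, le q p) \/ (forall q, le p q) | _ => False end.

Section OrderConvergence.

Context {L : Type} (lt : L -> L -> Prop) (RC : regular_cardinal L lt).
Context {P : Type} (le : P -> P -> Prop) (PO : is_poset le).

Lemma le_refl p : le p p.
Proof. apply PO. Qed.

Lemma le_antisym p q : le p q -> le q p -> p = q.
Proof. apply PO. Qed.

Lemma le_trans p q r : le p q -> le q r -> le p r.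
Proof. apply PO. Qed.

Lemma O_conv_of_proper_conv i f x : proper_conv lt le i f x -> O_conv lt le i f x.
Proof. destruct i; simpl; auto. intros (M & N & _ & _ & Hrest); exists M, N; exact Hrest. Qed.

Lemma O_conv_of_trivial_limit i f x : trivial_limit le i x -> O_conv lt le i f x.
Proof.
  destruct i; simpl; try contradiction; intros [Htop|Hbot].
  - exists (fun p => p = x), (fun _ => False).
    split; [apply is_sup_singleton, le_refl|split; [split|]].
    + intros n [].
    + intros l _; apply Htop.
    + intros m n _ [].
  - exists (fun _ => False), (fun p => p = x).
    split; [split|split; [apply is_inf_singleton, le_refl|]].
    + intros m [].
    + intros u _; apply Hbot.
    + intros m n [].
Qed.

Lemma proper_conv_or_trivial_limit i f x :
  O_conv lt le i f x -> proper_conv lt le i f x \/ trivial_limit le i x.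
Proof.
  destruct i; simpl; auto; intros (M & N & HM & HN & Hbr).
  destruct (classic (exists m, M m)) as [HMne|HMe];
    [destruct (classic (exists n, N n)) as [HNne|HNe]|].
  - left; exists M, N; auto.
  - right; left; intros q; apply (proj2 HN); intros n Hn; exfalso; apply HNe; exists n; exact Hn.
  - right; right; intros q; apply (proj2 HM); intros m Hm; exfalso; apply HMe; exists m; exact Hm.
Qed.

Lemma O3_conv_nonempty_of_proper_conv i f x :
  proper_conv lt le i f x -> O3_conv_nonempty lt le f x.
Proof.
  destruct i; simpl.
  - intros (y & w & Hev & Hy & Hsup & Hw & Hinf); destruct (L_inhabited lt RC) as [a0].
    exists (range y), (range w).
    split; [exists (y a0), a0; reflexivity|split; [exists (w a0), a0; reflexivity|]].
    split; [exact Hsup|split; [exact Hinf|]].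
    intros m n [a <-] [b <-].
    assert (Hab : eventually lt (fun g => leq_of lt a g /\ leq_of lt b g))
      by (apply (eventually_and lt RC); [exists a|exists b]; auto).
    destruct (eventually_and lt RC _ _ Hev Hab) as [c Hc].
    exists c; intros g Hg; destruct (Hc g Hg) as [[Hyf Hfw] [Hag Hbg]].
    split; [exact (le_trans _ _ _ (Hy a g Hag) Hyf)|exact (le_trans _ _ _ Hfw (Hw b g Hbg))].
  - intros (M & N & [HM _] & [HN _] & Hrest); exists M, N; auto.
  - auto.
Qed.

Lemma O3_conv_nonempty_le f z z' :
  O3_conv_nonempty lt le f z -> O3_conv_nonempty lt le f z' -> le z z'.
Proof.
  intros (M & N & _ & [n0 Hn0] & HM & _ & Hbr) (M' & N' & [m0 Hm0] & _ & _ & HN' & Hbr').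
  apply (sup_le_inf le M N' _ _ HM HN'); intros m n Hm Hn.
  destruct (eventually_and lt RC _ _ (Hbr m n0 Hm Hn0) (Hbr' m0 n Hm0 Hn)) as [a Ha].
  destruct (Ha a (leq_refl lt a)) as [[Hma _] [_ Han]]; exact (le_trans _ _ _ Hma Han).
Qed.

Lemma O3_conv_nonempty_frequent_value f z c :
  frequently lt (fun a => f a = c) -> O3_conv_nonempty lt le f z -> z = c.
Proof.
  intros Hc (M & N & [m0 Hm0] & [n0 Hn0] & HM & HN & Hbr).
  assert (Hbetween : forall m n, M m -> N n -> le m c /\ le c n).
  { intros m n Hm Hn; destruct (eventually_frequently lt _ _ (Hbr m n Hm Hn) Hc) as [b [Hb <-]].
    exact Hb. }
  apply le_antisym; [apply (proj2 HM)|apply (proj2 HN)]; intros p Hp.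
  - exact (proj1 (Hbetween p n0 Hp Hn0)).
  - exact (proj2 (Hbetween m0 p Hm0 Hp)).
Qed.

Lemma proper_conv_reindex i g z h :
  reindexing lt h -> proper_conv lt le i g z -> proper_conv lt le i (fun a => g (h a)) z.
Proof.
  intros Hh; destruct i; simpl.
  1: { intros (y & w & Hev & Hy & Hsup & Hw & Hinf).
       exists (fun a => y (h a)), (fun a => w (h a)).
       split; [exact (eventually_reindex lt RC _ h Hh Hev)|].
       split; [intros a b Hab; apply Hy, (proj1 Hh), Hab|].
       split; [exact (is_sup_range_reindex le lt y h z le_trans Hy (proj2 Hh) Hsup)|].
       split; [intros a b Hab; apply Hw, (proj1 Hh), Hab|].
       (* [decreasing] and [is_inf] are [increasing] and [is_sup] for the reversed order. *)
       exact (is_sup_range_reindex (fun p q => le q p) lt w h z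
                (fun p q r Hpq Hqr => le_trans _ _ _ Hqr Hpq) Hw (proj2 Hh) Hinf). }
  all: intros (M & N & HM & HN & Hsup & Hinf & Hbr); exists M, N.
  all: do 4 (split; [assumption|]); intros m n Hm Hn.
  all: exact (eventually_reindex lt RC _ h Hh (Hbr m n Hm Hn)).
Qed.

Lemma proper_conv_eventually_eq i g g' z :
  eventually lt (fun a => g a = g' a) -> proper_conv lt le i g z -> proper_conv lt le i g' z.
Proof.
  intros Heq; destruct i; simpl.
  1: { intros (y & w & Hev & Hrest); exists y, w; split; [|exact Hrest].
       exact (eventually_eq_transport lt RC (fun a p => le (y a) p /\ le p (w a)) g g' Heq Hev). }
  all: intros (M & N & HM & HN & Hsup & Hinf & Hbr); exists M, N.
  all: do 4 (split; [assumption|]); intros m n Hm Hn.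
  all: exact (eventually_eq_transport lt RC (fun _ p => le m p /\ le p n) g g' Heq
                (Hbr m n Hm Hn)).
Qed.

Lemma proper_conv_const i c : proper_conv lt le i (fun _ => c) c.
Proof.
  destruct (L_inhabited lt RC) as [a0]; destruct i; simpl.
  - exists (fun _ => c), (fun _ => c).
    split; [exists a0; intros; split; apply le_refl|].
    split; [intros a b _; apply le_refl|].
    split; [apply is_sup_range_const; [exact (inhabits a0)|exact le_refl]|].
    split; [intros a b _; apply le_refl|].
    exact (is_sup_range_const (fun p q => le q p) c (inhabits a0) le_refl).
  - exists (fun p => p = c), (fun p => p = c).
    split; [apply directed_singleton, le_refl|split; [apply filtered_singleton, le_refl|]].
    split; [apply is_sup_singleton, le_refl|split; [apply is_inf_singleton, le_refl|]].
    intros m n -> ->; exists a0; intros; split; apply le_refl.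
  - exists (fun p => p = c), (fun p => p = c).
    split; [exists c; reflexivity|split; [exists c; reflexivity|]].
    split; [apply is_sup_singleton, le_refl|split; [apply is_inf_singleton, le_refl|]].
    intros m n -> ->; exists a0; intros; split; apply le_refl.
Qed.

Lemma proper_conv_frequent_value i g z c :
  frequently lt (fun a => g a = c) -> proper_conv lt le i g z -> z = c.
Proof.
  intros Hc Hconv; apply (O3_conv_nonempty_frequent_value g z c Hc).
  exact (O3_conv_nonempty_of_proper_conv i g z Hconv).
Qed.

Lemma proper_conv_unique i g z z' :
  proper_conv lt le i g z -> proper_conv lt le i g z' -> z = z'.
Proof.
  intros Hz Hz'; apply O3_conv_nonempty_of_proper_conv in Hz, Hz'.
  apply le_antisym; apply (O3_conv_nonempty_le g); assumption.
Qed.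

Lemma trivial_limit_frequently_closed i :
  frequently_closed lt (proper_conv lt le i) (trivial_limit le i).
Proof.
  assert (Hsub : forall Z : P -> Prop, (forall p q, Z p -> Z q -> p = q) ->
                 frequently_closed lt (proper_conv lt le i) Z).
  { intros Z HZ; apply (frequently_closed_subsingleton lt RC);
      [apply proper_conv_frequent_value|exact HZ]. }
  destruct i; [apply Hsub; intros p q []..|].
  apply (frequently_closed_union lt RC); apply Hsub; intros p q Hp Hq; apply le_antisym; auto.
Qed.

Lemma topological_limit_of_tau_conv i f x :
  tau_conv lt le i f x -> topological_limit lt (proper_conv lt le i) (trivial_limit le i) f x.
Proof.
  intros Htau X HX HD Hx; apply (Htau (fun p => ~ X p)); [|exact Hx].
  intros g z Hg Hz HnXz; apply HnXz.
  destruct (proper_conv_or_trivial_limit i g z Hz) as [Hproper|Htriv].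
  - apply (HX g z); [intros a; apply NNPP, Hg|exact Hproper].
  - exact (HD z Htriv).
Qed.

End OrderConvergence.

Theorem mainTheorem3 (L : Type) (lt : L -> L -> Prop) (P : Type) (le : P -> P -> Prop)
  (i : Oidx) (f : L -> P) (x : P) :
  regular_cardinal L lt -> is_poset le -> tau_conv lt le i f x ->
  exists h : L -> L, isotone lt h /\ cofinal lt h /\
    O_conv lt le i (fun a => f (h a)) x.
Proof.
  intros RC PO Htau.
  destruct (classic (trivial_limit le i x)) as [Htriv|Hnontriv].
  - exists (fun a => a); split; [intros a b Hab; exact Hab|].
    split; [intros a; exists a; apply leq_refl|].
    apply O_conv_of_trivial_limit; [exact PO|exact Htriv].
  - destruct (subsequence_conv_of_topological_limit lt RC (proper_conv lt le i)
      (proper_conv_reindex lt RC le PO i) (proper_conv_eventually_eq lt RC le i)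
      (proper_conv_const lt RC le PO i) (proper_conv_frequent_value lt RC le PO i)
      (proper_conv_unique lt RC le PO i) (trivial_limit le i) f x
      (trivial_limit_frequently_closed lt RC le PO i) Hnontriv
      (topological_limit_of_tau_conv lt le i f x Htau)) as [h [[Hiso Hcof] Hconv]].
    exists h; split; [exact Hiso|split; [exact Hcof|]].
    apply O_conv_of_proper_conv; exact Hconv.
Qed.
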